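(* Let $\rho$ be a $d$-dimensional state that is diagonally dominant, i.e. $\rho_{ii}\ge\sum_{j\ne i}|\rho_{ij}|$ for all $i=1,\dots,d$. Then $\rho\in\mathrm{co}(\mathcal U)$. Consequently, every $d$-dimensional state $\rho$ with $\|\rho-\mathbb 1/d\|_{1\to1}\le1/d$ belongs to $\mathrm{co}(\mathcal U)$, where $\|X\|_{1\to1}=\max_{1\le i\le d}\sum_{j=1}^d|X_{ij}|$.
   Context: Fixed computational basis $\{|i\rangle\}_{i=1}^d$. $\mathcal U_k$ is the set of uniformly coherent states $|\Psi\rangle=k^{-1/2}\sum_{j\in J}e^{i\theta_j}|j\rangle$, $|J|=k$, $\theta_j\in\mathbb R$; $\mathcal U=\bigcup_{k=1}^d\mathcal U_k$ (as density matrices), and $\mathrm{co}(\mathcal U)$ its convex hull. *)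

From HB Require Import structures.
From mathcomp Require Import all_boot all_order all_algebra.
From mathcomp Require Import reals trigo.
From mathcomp Require Import complex.
Set Implicit Arguments. Unset Strict Implicit. Unset Printing Implicit Defensive.
Import Order.TTheory GRing.Theory Num.Theory.
Local Open Scope ring_scope.
Local Open Scope complex_scope.

Section QState.
Variable R : realType.
Local Notation C := R[i].

Definition adjmx (m n : nat) (A : 'M[C]_(m, n)) : 'M[C]_(n, m) :=
  \matrix_(i, j) Num.conj (A j i).

Definition is_state (d : nat) (rho : 'M[C]_d) : Prop :=
  [/\ adjmx rho = rho,
      forall x : 'cV[C]_d, 0 <= (adjmx x *m rho *m x) 0 0
    & \tr rho = 1].

Definition expi (t : R) : C := (cos t)%:C + 'i * (sin t)%:C.

Definition ket (d : nat) (j : 'I_d) : 'cV[C]_d := \col_i (i == j)%:R.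

Definition ucvec (d : nat) (J : {set 'I_d}) (theta : 'I_d -> R) : 'cV[C]_d :=
  ((Num.sqrt (#|J|%:R : R))^-1)%:C *: \sum_(j in J) expi (theta j) *: ket j.

(* U_k (as density matrices) *)
Definition Ucoh (d k : nat) (rho : 'M[C]_d) : Prop :=
  exists (J : {set 'I_d}) (theta : 'I_d -> R),
    #|J| = k /\ rho = ucvec J theta *m adjmx (ucvec J theta).

Definition Ucoh_all (d : nat) (rho : 'M[C]_d) : Prop :=
  exists k : nat, (1 <= k <= d)%N /\ Ucoh k rho.

Definition in_coU (d : nat) (rho : 'M[C]_d) : Prop :=
  exists (n : nat) (w : 'I_n -> R) (S : 'I_n -> 'M[C]_d),
    [/\ forall l, 0 <= w l,
        \sum_l w l = 1,
        forall l, Ucoh_all (S l)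
      & rho = \sum_l (w l)%:C *: S l].

Definition diag_dominant (d : nat) (rho : 'M[C]_d) : Prop :=
  forall i : 'I_d, \sum_(j | j != i) `|rho i j| <= rho i i.

Definition norm11 (d : nat) (X : 'M[C]_d) : C :=
  \big[Num.max/0]_(i < d) \sum_(j < d) `|X i j|.

End QState.

From HB Require Import structures.
From mathcomp Require Import all_boot all_order all_algebra.
From mathcomp Require Import reals trigo.
From mathcomp Require Import complex.
From mathcomp Require Import ring lra.
Import Order.TTheory GRing.Theory Num.Theory.
Local Open Scope ring_scope.
Local Open Scope complex_scope.

(* Write rho_ij = |rho_ij| e^{i theta_ij}.  For i <> j the two-level coherent
   state psi_ij = (e^{i theta_ij}|i> + |j>)/sqrt 2 satisfies, by hermiticity,
     |rho_ij| psi_ij psi_ij^* = 1/2 (F_ij + F_ji),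
     F_ij := |rho_ij| |i><i| + rho_ij |i><j|,
   so summing over the ordered pairs i <> j gives the whole off-diagonal part
   of rho plus the diagonal matrix sum_i (sum_{j<>i} |rho_ij|) |i><i|.  Diagonal
   dominance says exactly that the remaining diagonal weights
   rho_ii - sum_{j<>i} |rho_ij| on the states |i><i| are nonnegative, and all
   the weights add up to tr rho = 1.  For the second claim, row i of
   ||rho - 1/d||_{1->1} <= 1/d gives
   sum_{j<>i} |rho_ij| <= 1/d - |rho_ii - 1/d| <= rho_ii. *)

Section CoherentDecomposition.
Variable R : realType.
Local Notation C := R[i].

Lemma expi0 : expi 0 = 1 :> C.
Proof. by rewrite /expi cos0 sin0 mulr0 addr0. Qed.

Lemma expi_mulJ (t : R) : expi t * Num.conj (expi t) = 1.
Proof.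
rewrite /expi; apply/eqP; rewrite eq_complex /=; apply/andP; split; apply/eqP.
  by rewrite -[RHS](cos2Dsin2 t); ring.
by ring.
Qed.

Lemma exists_cos_sin (x y : R) : x ^+ 2 + y ^+ 2 = 1 -> exists t, cos t = x /\ sin t = y.
Proof.
move=> xy1.
have x2_le1 : x ^+ 2 <= 1 by rewrite -xy1 lerDl sqr_ge0.
have x_itv : -1 <= x <= 1 by apply/andP; split; nra.
have sqrt_y : Num.sqrt (1 - x ^+ 2) = `|y| by rewrite -xy1 addrAC subrr add0r sqrtr_sqr.
exists (if 0 <= y then acos x else - acos x).
case: ifP => y_ge0; rewrite ?cosN ?sinN acosK ?sin_acos ?sqrt_y //.
- by rewrite ger0_norm.
- by rewrite ltr0_norm ?opprK // ltNge y_ge0.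
Qed.

Lemma polar_expi (z : C) : exists t, z = `|z| * expi t.
Proof.
have [->|z_neq0] := eqVneq z 0; first by exists 0; rewrite normr0 mul0r.
case: z z_neq0 => a b ab_neq0.
set r := Num.sqrt (a ^+ 2 + b ^+ 2).
have normE : `|a +i* b| = r%:C by rewrite normc_def.
have r_neq0 : r != 0 by rewrite -(inj_eq (@complexI R)) -normE normr_eq0.
have ab_gt0 : 0 < a ^+ 2 + b ^+ 2.
  by rewrite -sqrtr_gt0 lt_neqAle eq_sym r_neq0 sqrtr_ge0.
have [t [cos_t sin_t]] : exists t, cos t = a / r /\ sin t = b / r.
  apply: exists_cos_sin.
  by rewrite !expr_div_n -mulrDl sqr_sqrtr ?divff ?lt0r_neq0 ?ltW.
exists t; rewrite normE /expi cos_t sin_t.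
apply/eqP; rewrite eq_complex /=; apply/andP; split; apply/eqP; field; exact: r_neq0.
Qed.

Lemma adjmxD {m n} (A B : 'M[C]_(m, n)) : adjmx (A + B) = adjmx A + adjmx B.
Proof. by apply/matrixP => i j; rewrite !mxE rmorphD. Qed.

Lemma adjmxZ {m n} (c : C) (A : 'M[C]_(m, n)) : adjmx (c *: A) = Num.conj c *: adjmx A.
Proof. by apply/matrixP => i j; rewrite !mxE rmorphM. Qed.

Lemma ket_mul_adj {d} (i j : 'I_d) : ket R i *m adjmx (ket R j) = delta_mx i j.
Proof. by apply/matrixP => a b; rewrite !mxE big_ord1 !mxE rmorph_nat -natrM mulnb. Qed.

Lemma outer_scale {m} (c : C) (v : 'cV[C]_m) :
  (c *: v) *m adjmx (c *: v) = (c * Num.conj c) *: (v *m adjmx v).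
Proof. by rewrite adjmxZ -scalemxAl -scalemxAr scalerA. Qed.

Definition pair_vec {d} (i j : 'I_d) (t : R) : 'cV[C]_d :=
  ucvec [set i; j] (fun k => if k == i then t else 0).

Definition pair_state {d} (i j : 'I_d) (t : R) : 'M[C]_d :=
  pair_vec i j t *m adjmx (pair_vec i j t).

Lemma pair_state_Ucoh {d} (i j : 'I_d) t : Ucoh_all (pair_state i j t).
Proof.
exists #|[set i; j]|; split; last by exists [set i; j], (fun k => if k == i then t else 0).
by rewrite cards2 /= -[X in (_ <= X)%N](card_ord d) -cards2 max_card.
Qed.

Lemma pair_state_diag {d} (i : 'I_d) t : pair_state i i t = delta_mx i i.
Proof.
rewrite /pair_state /pair_vec /ucvec setUid cards1 big_set1 eqxx sqrtr1 invr1 rmorph1 scale1r.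
by rewrite outer_scale expi_mulJ scale1r ket_mul_adj.
Qed.

Lemma pair_state_offdiag {d} (i j : 'I_d) t : i != j ->
  pair_state i j t = 2^-1 *: ((delta_mx i i + expi t *: delta_mx i j)
                            + (delta_mx j j + Num.conj (expi t) *: delta_mx j i)).
Proof.
move=> ij.
have half : ((Num.sqrt 2)^-1)%:C * Num.conj ((Num.sqrt 2)^-1)%:C = 2^-1 :> C.
  rewrite geC0_conj ?ler0c ?invr_ge0 ?sqrtr_ge0 // -rmorphM -invfM -expr2.
  by rewrite sqr_sqrtr ?ler0n // rmorphV ?unitfE ?pnatr_eq0 // rmorph_nat.
have ji : j != i by rewrite eq_sym.
rewrite /pair_state /pair_vec /ucvec cards2 ij big_setU1 ?inE //= (big_set1 _ j).
rewrite eqxx (negbTE ji) expi0 scale1r outer_scale half; congr (_ *: _).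
rewrite adjmxD adjmxZ mulmxDl !mulmxDr -!scalemxAl -!scalemxAr !ket_mul_adj.
by rewrite scalerA expi_mulJ scale1r [_ + delta_mx j j]addrC.
Qed.

Lemma sum_offdiag_swap {V : nmodType} {I : finType} (F : I -> I -> V) :
  \sum_i \sum_(j | j != i) F j i = \sum_i \sum_(j | j != i) F i j.
Proof.
rewrite (exchange_big_dep predT) //=; apply: eq_bigr => i _.
by apply: eq_bigl => j; rewrite eq_sym.
Qed.

Lemma hermitian_entryJ {d} (A : 'M[C]_d) : adjmx A = A -> forall i j, A j i = Num.conj (A i j).
Proof. by move=> AH i j; rewrite -[in LHS]AH mxE. Qed.

Definition dd_weight {d} (rho : 'M[C]_d) (i j : 'I_d) : C :=
  if i == j then rho i i - \sum_(k | k != i) `|rho i k| else `|rho i j|.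

Lemma dd_weight_sum {d} (rho : 'M[C]_d) : \sum_i \sum_j dd_weight rho i j = \tr rho.
Proof.
apply: eq_bigr => i _; rewrite (bigD1 i) //= /dd_weight eqxx.
by under eq_bigr => j ji do rewrite eq_sym (negbTE ji); rewrite subrK.
Qed.

Lemma dd_decomposition {d} (rho : 'M[C]_d) (theta : 'I_d -> 'I_d -> R) :
  adjmx rho = rho -> (forall i j, rho i j = `|rho i j| * expi (theta i j)) ->
  rho = \sum_i \sum_j dd_weight rho i j *: pair_state i j (theta i j).
Proof.
move=> /hermitian_entryJ rhoJ rho_polar.
pose F i j := `|rho i j| *: delta_mx i i + rho i j *: delta_mx i j.
have offdiag i j : i != j ->
    dd_weight rho i j *: pair_state i j (theta i j) = (2^-1 : C) *: (F i j + F j i).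
  move=> ij; rewrite /dd_weight (negbTE ij) pair_state_offdiag //.
  have rho_polarJ : `|rho i j| * Num.conj (expi (theta i j)) = rho j i.
    by rewrite (rhoJ i j) {2}rho_polar rmorphM /= conj_normC.
  rewrite scalerA mulrC -scalerA; congr (_ *: _).
  by rewrite !scalerDr !scalerA -rho_polar rho_polarJ /F (rhoJ i j) norm_conjC.
have row i : \sum_j dd_weight rho i j *: pair_state i j (theta i j)
    = dd_weight rho i i *: delta_mx i i + (2^-1 : C) *: \sum_(j | j != i) (F i j + F j i).
  rewrite (bigD1 i) //= pair_state_diag scaler_sumr; congr (_ + _).
  by apply: eq_bigr => j ji; rewrite offdiag // eq_sym.
rewrite (eq_bigr _ (fun i _ => row i)) big_split /= -scaler_sumr.
under [X in _ *: X]eq_bigr do rewrite big_split.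
rewrite big_split /= (sum_offdiag_swap F) scalerDr -scalerDl -div1r -splitr scale1r.
rewrite -big_split /= {1}[rho]matrix_sum_delta; apply: eq_bigr => i _.
by rewrite (bigD1 i) //= big_split /= -scaler_suml addrA -scalerDl /dd_weight eqxx subrK.
Qed.

Lemma in_coU_convex {d} (I : finType) (w : I -> C) (S : I -> 'M[C]_d) :
  (forall k, 0 <= w k) -> \sum_k w k = 1 -> (forall k, Ucoh_all (S k)) ->
  in_coU (\sum_k w k *: S k).
Proof.
move=> w_ge0 w_sum1 S_coh.
have wRe k : (complex.Re (w k))%:C = w k :> C by apply: RRe_real; exact: ger0_real.
exists #|I|, (fun l => complex.Re (w (enum_val l))), (fun l => S (enum_val l)); split => //.
- by move=> l; rewrite -ler0c wRe.
- apply: (@complexI R); rewrite rmorph_sum rmorph1 -w_sum1 (big_enum_val (A := I)).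
  by apply: eq_bigr => l _; exact: wRe.
- by rewrite (big_enum_val (A := I)); apply: eq_bigr => l _; rewrite /= wRe.
Qed.

Lemma diag_dominant_in_coU {d} (rho : 'M[C]_d) :
  is_state rho -> diag_dominant rho -> in_coU rho.
Proof.
move=> [rhoH _ rho_tr1] rho_dd.
have [theta rho_polar] := fin_all_exists (fun p : 'I_d * 'I_d => polar_expi (rho p.1 p.2)).
rewrite (dd_decomposition _ _ rhoH (fun i j => rho_polar (i, j))).
rewrite pair_bigA /=; apply: in_coU_convex => [[i j] /=||p].
- rewrite /dd_weight; case: eqP => _; last exact: normr_ge0.
  by rewrite subr_ge0 rho_dd.
- by rewrite -pair_bigA dd_weight_sum.
- exact: pair_state_Ucoh.
Qed.

Lemma complex_max (x y : R) : (Num.max x y)%:C = Num.max x%:C y%:C :> C.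
Proof. by rewrite /Order.max ltcR; case: ifP. Qed.

Lemma row_le_norm11 {d} (X : 'M[C]_d) i : \sum_j `|X i j| <= norm11 X.
Proof.
pose row k := complex.Re (\sum_j `|X k j|).
have rowE k : (row k)%:C = \sum_j `|X k j| :> C.
  by apply: RRe_real; apply: ger0_real; exact: sumr_ge0.
rewrite /norm11 -rowE; under eq_bigr do rewrite -rowE.
by rewrite -(big_morph _ complex_max (erefl (0 : R)%:C)) lecR le_bigmax.
Qed.

Lemma norm11_ball_diag_dominant {d} (rho : 'M[C]_d) : adjmx rho = rho ->
  norm11 (rho - (d%:R)^-1%:M) <= (d%:R)^-1 -> diag_dominant rho.
Proof.
move=> /hermitian_entryJ rhoJ rho_near i.
set c : C := (d%:R)^-1.
have rho_ii_real : rho i i \is Num.real by apply/CrealP; rewrite -rhoJ.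
have c_real : c \is Num.real by rewrite rpredV rpred_nat.
have := le_trans (row_le_norm11 (rho - c%:M) i) rho_near.
rewrite (bigD1 i) //= !mxE eqxx mulr1n.
under eq_bigr => j ji do rewrite !mxE eq_sym (negbTE ji) mulr0n subr0.
move=> row_i.
have diag_dist : c - rho i i <= `|rho i i - c|.
  by rewrite distrC real_ler_norm // rpredB.
apply: (@le_trans _ _ (c - `|rho i i - c|)); first by rewrite lerBrDl.
by rewrite lerBlDl -lerBlDr.
Qed.

End CoherentDecomposition.

Theorem lemma13 (R : realType) (d : nat) :
  (forall rho : 'M[R[i]]_d, is_state rho -> diag_dominant rho -> in_coU rho) /\
  (forall rho : 'M[R[i]]_d, is_state rho ->
     norm11 (rho - (d%:R)^-1%:M) <= (d%:R)^-1 -> in_coU rho).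
Proof.
split=> [|rho rho_state rho_near]; first exact: diag_dominant_in_coU.
apply: diag_dominant_in_coU => //.
by case: rho_state => rhoH _ _; exact: norm11_ball_diag_dominant.
Qed.
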